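(* Let $\Gamma=(G,\sigma)$, $G=(V,E)$, be a connected signed graph. Then there exists a real symmetric matrix $M$ compatible with $\Gamma$ such that the smallest eigenvalue $\lambda_1$ of $M$ is simple and a corresponding eigenfunction $f_1$ is nonzero at every vertex. In particular, $\mathfrak{S}(f_1)=1$ and the strong nodal domain of $f_1$ is the whole graph $G$.
   Context: A signed graph $\Gamma=(G,\sigma)$ is a finite simple undirected graph $G=(V,E)$ with $\sigma:E\to\{+1,-1\}$. The induced signed graph of a real symmetric $n\times n$ matrix $M$ has vertices $x_1,\dots,x_n$, edge $\{x_i,x_j\}$ iff $i\ne j$ and $M_{ij}\ne0$, sign $-M_{ij}/|M_{ij}|$; $M$ is compatible with $\Gamma$ if its induced signed graph is $\Gamma$. A walk is $y_1,\dots,y_m$ ($m\ge2$) with consecutive vertices adjacent; for $f:V\to\mathbb R$ an S-walk is a walk with $f(y_j)\sigma_{y_jy_{j+1}}f(y_{j+1})>0$ for all $j$. The strong nodal domains of $f$ are the induced subgraphs on the equivalence classes of the relation on $\{x:f(x)\ne0\}$ ''$x=y$ or an S-walk connects $x$ and $y$''; $\mathfrak{S}(f)$ is their number. *)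

From HB Require Import structures.
From mathcomp Require Import all_boot all_order all_algebra.
From mathcomp Require Import reals.
Set Implicit Arguments. Unset Strict Implicit. Unset Printing Implicit Defensive.
Import Order.TTheory GRing.Theory Num.Theory.
Local Open Scope ring_scope.

(* A signed graph on vertex set 'I_n: a simple graph given by a symmetric,
   irreflexive adjacency relation [adj], and a sign [sigma x y] in {+1,-1}
   on every edge {x,y} (symmetric; values off edges are irrelevant). *)
Definition signed_graph (R : numDomainType) (n : nat)
  (adj : rel 'I_n) (sigma : 'I_n -> 'I_n -> R) : Prop :=
  [/\ forall x, ~~ adj x x,
      forall x y, adj x y = adj y x,
      forall x y, adj x y -> sigma x y = sigma y x &
      forall x y, adj x y -> sigma x y = 1 \/ sigma x y = -1].

Definition connected_graph (n : nat) (adj : rel 'I_n) : Prop :=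
  forall x y, connect adj x y.

Definition compatible (R : numFieldType) (n : nat)
  (adj : rel 'I_n) (sigma : 'I_n -> 'I_n -> R) (M : 'M[R]_n) : Prop :=
  (forall i j, i != j -> (M i j != 0) = adj i j) /\
  (forall i j, adj i j -> sigma i j = - (M i j / `|M i j|)).

Definition symmetric_mx (R : ringType) (n : nat) (M : 'M[R]_n) : Prop :=
  M^T = M.

Definition smallest_eigenvalue (R : realFieldType) (n : nat)
  (M : 'M[R]_n) (l : R) : Prop :=
  eigenvalue M l /\ forall l', eigenvalue M l' -> l <= l'.

Definition simple_eigenvalue (R : fieldType) (n : nat)
  (M : 'M[R]_n) (l : R) : Prop :=
  mup l (char_poly M) = 1%N.

Definition S_step (R : numDomainType) (n : nat)
  (adj : rel 'I_n) (sigma : 'I_n -> 'I_n -> R) (f : 'I_n -> R) : rel 'I_n :=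
  fun x y => adj x y && (0 < f x * sigma x y * f y).

Definition S_connected (R : numDomainType) (n : nat)
  (adj : rel 'I_n) (sigma : 'I_n -> 'I_n -> R) (f : 'I_n -> R) : rel 'I_n :=
  connect (S_step adj sigma f).

Definition strong_nodal_domains (R : numDomainType) (n : nat)
  (adj : rel 'I_n) (sigma : 'I_n -> 'I_n -> R) (f : 'I_n -> R) : {set {set 'I_n}} :=
  [set [set y | S_connected adj sigma f x y] | x in [set x | f x != 0]].

Definition num_strong_nodal_domains (R : numDomainType) (n : nat)
  (adj : rel 'I_n) (sigma : 'I_n -> 'I_n -> R) (f : 'I_n -> R) : nat :=
  #|strong_nodal_domains adj sigma f|.

From HB Require Import structures.
From mathcomp Require Import all_boot all_order all_algebra.
From mathcomp Require Import reals.
From mathcomp Require Import ring lra.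
Import Order.TTheory GRing.Theory Num.Theory.
Local Open Scope ring_scope.

Set Implicit Arguments. Unset Strict Implicit. Unset Printing Implicit Defensive.

(* Choose signs s : V -> {1, -1} such that the S-edges of s (those with
   s x sigma(x,y) s y > 0) connect the graph; they exist because flipping all
   signs outside the S-component of a vertex makes every edge leaving that
   component an S-edge, so a sign vector with a largest component has a full
   one. Put M x y = - sigma(x,y) w(x,y) with w = 1 on S-edges and w = eps on
   the other edges, and choose the diagonal so that M s = 0. Substituting
   t = s v turns the quadratic form of M into a weighted sum of the squares
   (t x - t y)^2 with weight 1 on S-edges and - eps elsewhere. Since any two
   vertices are joined by an S-path of length < n, for eps n^4 <= 1/2 the
   negative terms cost at most half of the largest squared increment along
   an S-edge. So M is positive semidefinite, 0 is its smallest eigenvalue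
   with eigenvector s, and the form vanishes only on multiples of s, which
   makes 0 a simple root of the characteristic polynomial. *)

Section SimpleRootCharPoly.
Variables (F : fieldType) (n : nat) (M : 'M[F]_n.+1) (g : 'cV[F]_n.+1).

Definition char_poly_mx_col0 : 'M[{poly F}]_n.+1 :=
  \matrix_(i, j) if j == 0 then (g i 0)%:P else char_poly_mx M i j.

Hypotheses (g00 : g 0 0 != 0) (Mg : M *m g = 0).

(* Right multiplication by the matrix [g | e_1 ... e_n] replaces the first
   column of X - M by (X - M) g = X g. *)
Lemma char_poly_mx_col0_factor :
  char_poly_mx M *m map_mx polyC (\matrix_(i, j) if j == 0 then g i 0 else (i == j)%:R)
  = char_poly_mx_col0 *m diag_mx (\row_j if j == 0 then 'X else 1).
Proof.
apply/matrixP => i j; rewrite mul_mx_diag !mxE.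
have [-> | j0] := eqVneq j 0.
  have := congr1 (fun A : 'cV[F]_n.+1 => A i 0) Mg; rewrite !mxE => Mgi.
  under eq_bigr => k _ do rewrite !mxE mulrBl -polyCM.
  rewrite sumrB -rmorph_sum /= Mgi polyC0 subr0 (bigD1 i) //= big1 ?addr0.
    by rewrite eqxx mulr1n mulrC.
  by move=> k ki; rewrite eq_sym (negPf ki) mulr0n mul0r.
rewrite (bigD1 j) //= big1 ?addr0; last first.
  by move=> k kj; rewrite !mxE (negPf j0) (negPf kj) polyC0 mulr0.
by rewrite !mxE (negPf j0) eqxx polyC1 mulr1.
Qed.

Lemma char_poly_det_col0 : char_poly M * (g 0 0)%:P = \det char_poly_mx_col0 * 'X.
Proof.
have detU : \det (\matrix_(i, j) if j == 0 then g i 0 else (i == j)%:R) = g 0 0.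
  rewrite det_trig; last first.
    apply/is_trig_mxP => i j ij; rewrite mxE.
    have [j0 | _] := eqVneq j 0; first by move: ij; rewrite j0.
    by case: eqVneq ij => // ->; rewrite ltnn.
  by rewrite big_ord_recl big1 ?mulr1 => [|i _]; rewrite mxE ?eqxx.
have detD : \det (diag_mx (\row_(j < n.+1) if j == 0 then 'X else 1)) = 'X :> {poly F}.
  by rewrite det_diag big_ord_recl big1 ?mulr1 => [|i _]; rewrite mxE.
by rewrite -detU -det_map_mx -det_mulmx char_poly_mx_col0_factor det_mulmx detD.
Qed.

Hypothesis left_ker_orth : forall v : 'rV_n.+1, v *m M = 0 -> v *m g = 0 -> v = 0.

(* At X = 0 the columns of char_poly_mx_col0 are g and the other columns of
   - M; a left null vector is thus orthogonal to g and, as M g = 0, in the left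
   kernel of M. *)
Lemma char_poly_mx_col0_root0 : ~~ root (\det char_poly_mx_col0) 0.
Proof.
rewrite /root -horner_evalE -det_map_mx; apply/negP => /det0P [v vN0 v0].
have e j : (v *m map_mx (horner_eval 0) char_poly_mx_col0) 0 j = 0 by rewrite v0 mxE.
have vM_j j : j != 0 -> (v *m M) 0 j = 0.
  move=> j0; have := e j; rewrite !mxE.
  under eq_bigr => i _ do rewrite !mxE horner_evalE (negPf j0) !hornerE hornerMn
    hornerX mul0rn sub0r mulrN.
  by rewrite sumrN => /eqP; rewrite oppr_eq0 => /eqP.
have vg : v *m g = 0.
  apply/matrixP => a c; rewrite !ord1 [RHS]mxE -(e 0) !mxE.
  by apply: eq_bigr => i _; rewrite !mxE eqxx horner_evalE hornerC.
move/eqP: vN0; apply; apply: left_ker_orth vg; apply/matrixP => a j; rewrite ord1 [RHS]mxE.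
have [-> | j0] := eqVneq j 0; last exact: vM_j.
have := congr1 (fun A : 'M[F]_1 => A 0 0) (mulmxA v M g).
rewrite Mg mulmx0 !mxE (bigD1 0) //= big1 ?addr0 => [|k k0]; last by rewrite vM_j ?mul0r.
by move/esym/eqP; rewrite mulf_eq0 (negPf g00) orbF mxE => /eqP.
Qed.

Lemma mup_char_poly0 : mup 0 (char_poly M) = 1%N.
Proof.
have -> : char_poly M = 'X * (\det char_poly_mx_col0 * ((g 0 0)^-1)%:P).
  by rewrite mulrA [_ * \det _]mulrC -char_poly_det_col0 -mulrA -polyCM mulfV // mulr1.
rewrite mupMl; last first.
  by rewrite rootM rootC invr_eq0 negb_or g00 char_poly_mx_col0_root0.
by rewrite -[X in mup _ X]subr0 -polyC0 -[_ - _]expr1 mup_XsubCX eqxx.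
Qed.

End SimpleRootCharPoly.

Definition signs {R : ringType} {n : nat} (b : {ffun 'I_n -> bool}) (x : 'I_n) : R :=
  if b x then 1 else -1.

Lemma signs_sqr (R : ringType) n (b : {ffun 'I_n -> bool}) x :
  signs b x * signs b x = 1 :> R.
Proof. by rewrite /signs; case: (b x); rewrite ?mulr1 ?mulrNN ?mulr1. Qed.

Lemma signs_neq0 (R : numDomainType) n (b : {ffun 'I_n -> bool}) x : signs b x != 0 :> R.
Proof. by rewrite /signs; case: (b x); rewrite ?oppr_eq0 oner_eq0. Qed.

Section Switching.
Variables (R : realDomainType) (n : nat) (adj : rel 'I_n) (sigma : 'I_n -> 'I_n -> R).
Hypothesis sg : signed_graph adj sigma.

Lemma S_step_sym (f : 'I_n -> R) : symmetric (S_step adj sigma f).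
Proof.
case: sg => _ adj_sym sigma_sym _ x y; rewrite /S_step adj_sym.
by case Ayx: (adj y x) => //=; rewrite (sigma_sym y x) //; congr (_ < _); ring.
Qed.

Lemma signs_edge_prod b x y : adj x y ->
  signs b x * sigma x y * signs b y = 1 \/ signs b x * sigma x y * signs b y = -1.
Proof.
case: sg => _ _ _ sigma_pm /sigma_pm [] ->; rewrite /signs;
  by case: (b x); case: (b y); rewrite ?(mulr1, mul1r, mulrN, mulNr, opprK); by [left | right].
Qed.

Lemma signs_edge_prodN b x y : adj x y -> ~~ S_step adj sigma (signs b) x y ->
  signs b x * sigma x y * signs b y = -1.
Proof.
rewrite /S_step => Axy; rewrite Axy /=.
by case: (signs_edge_prod b Axy) => ->; rewrite ?ltr01.
Qed.

Definition S_component (b : {ffun 'I_n -> bool}) (r : 'I_n) : {set 'I_n} :=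
  [set y | S_connected adj sigma (signs b) r y].

Lemma S_componentE b r y :
  (y \in S_component b r) = S_connected adj sigma (signs b) r y.
Proof. by rewrite inE. Qed.

Definition flip_out (A : {set 'I_n}) (b : {ffun 'I_n -> bool}) : {ffun 'I_n -> bool} :=
  [ffun z => if z \in A then b z else ~~ b z].

Lemma signs_flip_out A b z :
  signs (flip_out A b) z = (if z \in A then signs b z else - signs b z) :> R.
Proof. by rewrite /signs ffunE; case: (z \in A); case: (b z); rewrite ?opprK. Qed.

(* Flipping every sign outside the S-component [C] of [r] keeps the S-edges
   inside [C] and turns every edge leaving [C] into an S-edge. *)
Lemma S_component_flip_out_proper b r u v :
  let C := S_component b r in
  u \in C -> v \notin C -> adj u v -> C \proper S_component (flip_out C b) r.
Proof.
move=> C Cu Cv Auv.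
have sub : C \subset S_component (flip_out C b) r.
  apply/subsetP => z; rewrite !S_componentE => /connectP [p pp ->]; apply/connectP.
  have Cp : all (mem C) (r :: p).
    by apply/allP => y /(path_connect pp) ry; rewrite inE /C S_componentE.
  exists p => //; apply: sub_in_path Cp pp => x y Cx Cy.
  by rewrite /S_step !signs_flip_out Cx Cy.
apply/properP; split => //; exists v => //; rewrite S_componentE.
apply: connect_trans (connect1 (x := u) _).
  by have := subsetP sub u Cu; rewrite /C S_componentE.
rewrite /S_step Auv !signs_flip_out Cu (negPf Cv) mulrN signs_edge_prodN ?opprK ?ltr01 //.
apply: contra Cv => SEuv; rewrite S_componentE; apply: connect_trans (connect1 SEuv).
by move: Cu; rewrite /C S_componentE.
Qed.

Lemma exists_S_connected_signs (r : 'I_n) : connected_graph adj ->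
  exists b : {ffun 'I_n -> bool}, forall x y, S_connected adj sigma (signs b) x y.
Proof.
move=> conn.
have [b _ b_max] := @arg_maxnP _ [ffun=> true] predT (fun b => #|S_component b r|) isT.
have C_closed : closed adj (S_component b r).
  have [_ adj_sym _ _] := sg.
  apply: intro_closed => [|u v Auv Cu]; first exact: sym_connect_sym.
  apply/negPn/negP => Cv.
  have := proper_card (S_component_flip_out_proper Cu Cv Auv).
  by rewrite ltnNge => /negP; apply; apply: b_max.
have Cr y : S_connected adj sigma (signs b) r y.
  by rewrite -S_componentE -(closed_connect C_closed (conn r y)) S_componentE; apply: connect0.
exists b => x y; apply: connect_trans (Cr y).
by rewrite (sym_connect_sym (@S_step_sym _)); apply: Cr.
Qed.

End Switching.

Lemma sqr_bigmax_le_sum (R : realDomainType) (I : finType) (P : pred I) (F : I -> R) :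
  (forall i, 0 <= F i) -> (\big[Num.max/0]_(i | P i) F i) ^+ 2 <= \sum_(i | P i) F i ^+ 2.
Proof.
move=> F_ge0; pose Q (m s : R) := (0 <= m) && (m ^+ 2 <= s).
suff /andP[] : Q (\big[Num.max/0]_(i | P i) F i) (\sum_(i | P i) F i ^+ 2) by [].
apply: (big_ind2 Q) => [|m1 s1 m2 s2 /andP[m1_ge0 m1s1] /andP[m2_ge0 m2s2]|i _].
- by rewrite /Q expr2 mul0r lexx.
- rewrite /Q le_max m1_ge0 /=; have := sqr_ge0 m1; have := sqr_ge0 m2.
  by case: (leP m1 m2) => _; lra.
- by rewrite /Q F_ge0 lexx.
Qed.

Section MaxIncrement.
Variables (R : realDomainType) (T : finType) (e : rel T) (t : T -> R).

Definition max_increment : R := \big[Num.max/0]_(p : T * T | e p.1 p.2) `|t p.1 - t p.2|.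

Lemma max_increment_ge0 : 0 <= max_increment.
Proof. exact: bigmax_ge_id. Qed.

Lemma le_max_increment x y : e x y -> `|t x - t y| <= max_increment.
Proof. exact: (@le_bigmax_cond _ _ _ 0 (x, y)). Qed.

Lemma path_increment_le x p :
  path e x p -> `|t x - t (last x p)| <= (size p)%:R * max_increment.
Proof.
elim: p x => [|y p IHp] x /=; first by rewrite subrr normr0 mul0r.
case/andP => exy ep; apply: le_trans (ler_distD (t y) _ _) _.
by rewrite -addn1 natrD mulrDl mul1r addrC lerD ?IHp ?le_max_increment.
Qed.

Lemma connect_increment_le x y :
  connect e x y -> `|t x - t y| <= #|T|%:R * max_increment.
Proof.
case/connectP => p ep ->; case: (shortenP ep) => p' ep' uniq_p' _.
apply: le_trans (path_increment_le ep') _.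
rewrite ler_wpM2r ?max_increment_ge0 // ler_nat.
apply: leq_trans (leqnSn _) _.
by rewrite -[(size p').+1]/(size (x :: p')) -(card_uniqP uniq_p') max_card.
Qed.

Lemma sqr_max_increment_le :
  max_increment ^+ 2 <= \sum_x \sum_y (e x y)%:R * (t x - t y) ^+ 2.
Proof.
apply: le_trans (sqr_bigmax_le_sum _ _) _ => [p|]; first exact: normr_ge0.
rewrite pair_bigA big_mkcond le_eqVlt; apply/orP; left; apply/eqP/eq_bigr => p _.
by case: (e p.1 p.2); rewrite ?mul1r ?mul0r // real_normK ?num_real.
Qed.

(* Edges of [e] contribute their full square; by connectivity every increment
   is at most [#|T| D], so every other term is at least [- eps (#|T| D)^2]. *)
Lemma sqr_max_increment_le_energy (eps : R) (B : T -> T -> R) :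
  (forall x y, connect e x y) -> 0 <= eps -> 2 * eps * #|T|%:R ^+ 4 <= 1 ->
  (forall x y, e x y -> 1 <= B x y) -> (forall x y, - eps <= B x y) ->
  max_increment ^+ 2 <= 2 * \sum_x \sum_y B x y * (t x - t y) ^+ 2.
Proof.
move=> conn eps_ge0 eps_small B_ge1 B_geN.
set D := max_increment; set K := #|T|%:R * D.
have term x y : (e x y)%:R * (t x - t y) ^+ 2 - eps * K ^+ 2 <= B x y * (t x - t y) ^+ 2.
  have sK : (t x - t y) ^+ 2 <= K ^+ 2.
    rewrite -real_normK ?num_real // lerXn2r ?nnegrE ?connect_increment_le //.
    by rewrite mulr_ge0 ?max_increment_ge0.
  have s_ge0 := sqr_ge0 (t x - t y).
  have epsK_ge0 : 0 <= eps * K ^+ 2 by rewrite mulr_ge0 ?sqr_ge0.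
  case exy: (e x y); rewrite /= ?mul1r ?mul0r ?sub0r.
    apply: le_trans (_ : _ <= (t x - t y) ^+ 2) _; first by rewrite lerBlDr lerDl.
    by rewrite -[leLHS]mul1r ler_wpM2r ?B_ge1.
  apply: le_trans (_ : _ <= - eps * (t x - t y) ^+ 2) _; last by rewrite ler_wpM2r.
  by rewrite mulNr lerN2 ler_wpM2l.
have sum_term : \sum_x \sum_y (e x y)%:R * (t x - t y) ^+ 2 - #|T|%:R ^+ 2 * (eps * K ^+ 2)
    <= \sum_x \sum_y B x y * (t x - t y) ^+ 2.
  apply: le_trans (_ : _ <= \sum_x \sum_y ((e x y)%:R * (t x - t y) ^+ 2 - eps * K ^+ 2)) _.
    under [X in _ <= X]eq_bigr => x _ do rewrite sumrB sumr_const.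
    by rewrite sumrB sumr_const -mulrnA -[(eps * K ^+ 2) *+ _]mulr_natl natrM expr2.
  by apply: ler_sum => x _; apply: ler_sum => y _; apply: term.
have small : 2 * (#|T|%:R ^+ 2 * (eps * K ^+ 2)) <= D ^+ 2.
  rewrite /K exprMn -[leRHS]mul1r (_ : 2 * _ = 2 * eps * #|T|%:R ^+ 4 * D ^+ 2); last by ring.
  by rewrite ler_wpM2r ?sqr_ge0.
have := sqr_max_increment_le; rewrite -/D.
move: sum_term small; set S := \sum_x \sum_y (e x y)%:R * _; set E := \sum_x \sum_y B x y * _.
lra.
Qed.

End MaxIncrement.

Section NodalMatrix.
Variables (R : realFieldType) (n : nat) (adj : rel 'I_n) (sigma : 'I_n -> 'I_n -> R).
Variables (b : {ffun 'I_n -> bool}) (eps : R).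
Hypothesis sg : signed_graph adj sigma.

Definition edge_weight x y : R := if S_step adj sigma (signs b) x y then 1 else eps.

Definition offdiag_coef x y : R := if adj x y then - sigma x y * edge_weight x y else 0.

Definition diag_coef x : R := - \sum_y offdiag_coef x y * signs b x * signs b y.

Definition nodal_mx : 'M[R]_n :=
  \matrix_(i, j) ((i == j)%:R * diag_coef i + offdiag_coef i j).

Definition switched_coef x y : R := - offdiag_coef x y * signs b x * signs b y.

Lemma offdiag_coef_sym x y : offdiag_coef x y = offdiag_coef y x.
Proof.
have [_ adj_sym sigma_sym _] := sg.
rewrite /offdiag_coef /edge_weight adj_sym S_step_sym //.
by case Ayx: (adj y x) => //; rewrite sigma_sym // adj_sym.
Qed.

Lemma nodal_mx_sym : symmetric_mx nodal_mx.
Proof.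
apply/matrixP => i j; rewrite !mxE offdiag_coef_sym eq_sym.
by case: eqVneq => [->|]; rewrite ?mul0r.
Qed.

Lemma nodal_mx_signs : nodal_mx *m (\col_x signs b x) = 0.
Proof.
apply/matrixP => i z; rewrite !mxE.
under eq_bigr => j _ do rewrite !mxE mulrDl.
rewrite big_split /= (bigD1 i) //= big1 ?addr0 => [|j]; last first.
  by rewrite eq_sym => /negPf ->; rewrite !mul0r.
rewrite eqxx mul1r /diag_coef mulNr mulr_suml -sumrN -big_split /=.
apply: big1 => j _.
have -> : offdiag_coef i j * signs b i * signs b j * signs b i
  = offdiag_coef i j * signs b j * (signs b i * signs b i) by ring.
by rewrite signs_sqr mulr1 addNr.
Qed.

Lemma nodal_mx_form (v : 'rV[R]_n) :
  2 * (v *m nodal_mx *m v^T) 0 0 =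
  \sum_x \sum_y switched_coef x y * (signs b x * v 0 x - signs b y * v 0 y) ^+ 2.
Proof.
pose G x y := switched_coef x y * (v 0 x * v 0 x) + v 0 x * offdiag_coef x y * v 0 y.
have formE : (v *m nodal_mx *m v^T) 0 0 = \sum_x \sum_y G x y.
  rewrite mxE; under eq_bigr => y _ do rewrite !mxE mulr_suml.
  rewrite exchange_big /=; apply: eq_bigr => x _; rewrite big_split /=.
  under eq_bigr => y _ do rewrite !mxE mulrDr mulrDl.
  rewrite big_split /= (bigD1 x) //= big1 ?addr0 => [|y]; last first.
    by rewrite eq_sym => /negPf ->; rewrite mul0r mulr0 mul0r.
  rewrite eqxx mul1r /diag_coef -sumrN mulr_sumr mulr_suml; congr (_ + _).
  by apply: eq_bigr => y _; rewrite /switched_coef; ring.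
rewrite formE mulr_natl mulr2n [X in _ + X]exchange_big -big_split /=.
apply: eq_bigr => x _; rewrite -big_split; apply: eq_bigr => y _.
rewrite /G /switched_coef (offdiag_coef_sym y x) /signs.
by case: (b x); case: (b y); rewrite /=; ring.
Qed.

Lemma switched_coefE x y :
  switched_coef x y = if S_step adj sigma (signs b) x y then 1 else if adj x y then - eps else 0.
Proof.
rewrite /switched_coef /offdiag_coef.
case Axy: (adj x y); last by rewrite /S_step Axy oppr0 !mul0r.
have -> : - (- sigma x y * edge_weight x y) * signs b x * signs b y
  = signs b x * sigma x y * signs b y * edge_weight x y by ring.
rewrite /edge_weight /S_step Axy /=.
by case: (signs_edge_prod sg b Axy) => ->; rewrite ?ltr01 ?ltr0N1 ?mul1r ?mulN1r.
Qed.

Hypothesis eps_gt0 : 0 < eps.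

Lemma nodal_mx_compatible : compatible adj sigma nodal_mx.
Proof.
have [adj_irr _ _ sigma_pm] := sg.
have w_gt0 x y : 0 < edge_weight x y by rewrite /edge_weight; case: ifP.
have sigma_norm x y : adj x y -> `|sigma x y| = 1.
  by case/sigma_pm => ->; rewrite ?normrN normr1.
split=> [i j ij | i j Aij].
  rewrite mxE (negPf ij) mul0r add0r /offdiag_coef.
  case Aij: (adj i j); last by rewrite eqxx.
  apply/idP; apply: mulf_neq0; last by rewrite gt_eqF.
  by rewrite oppr_eq0 -normr_eq0 sigma_norm ?oner_eq0.
have ij : i != j by apply: contraTneq Aij => ->; apply: adj_irr.
rewrite mxE (negPf ij) mul0r add0r /offdiag_coef Aij normrM normrN sigma_norm //.
by rewrite (gtr0_norm (w_gt0 i j)) mul1r !mulNr opprK mulfK ?gt_eqF.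
Qed.

End NodalMatrix.

Lemma mul_tr_self_gt0 (R : realDomainType) n (v : 'rV[R]_n) : v != 0 -> 0 < (v *m v^T) 0 0.
Proof.
move=> vN0; have sq_ge0 i : 0 <= v 0 i * v^T i 0 by rewrite mxE -expr2 sqr_ge0.
rewrite mxE lt0r sumr_ge0 ?andbT => [|i _]; last exact: sq_ge0.
apply: contra vN0 => /eqP /(psumr_eq0P (fun i _ => sq_ge0 i)) v0; apply/eqP/rowP => i.
by have /eqP := v0 i isT; rewrite !mxE mulf_eq0 orbb => /eqP.
Qed.

Section NodalSpectrum.
Variables (R : realFieldType) (n : nat) (adj : rel 'I_n.+1) (sigma : 'I_n.+1 -> 'I_n.+1 -> R).
Variables (b : {ffun 'I_n.+1 -> bool}) (eps : R).
Hypotheses (sg : signed_graph adj sigma)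
  (S_conn : forall x y, S_connected adj sigma (signs b) x y)
  (eps_gt0 : 0 < eps) (eps_small : 2 * eps * (n.+1)%:R ^+ 4 <= 1).

Local Notation M := (nodal_mx adj sigma b eps).
Local Notation t v := (fun x => signs b x * v 0 x).

Lemma nodal_mx_form_bound (v : 'rV[R]_n.+1) :
  max_increment (S_step adj sigma (signs b)) (t v) ^+ 2 <= 4 * (v *m M *m v^T) 0 0.
Proof.
have -> : 4 * (v *m M *m v^T) 0 0 = 2 * (2 * (v *m M *m v^T) 0 0) by ring.
rewrite nodal_mx_form //.
apply: (@sqr_max_increment_le_energy _ _ _ _ eps) => [|||x y|x y].
- exact: S_conn.
- exact: ltW.
- by rewrite card_ord.
- by rewrite switched_coefE // => ->.
- have epsN_le0 : - eps <= 0 by rewrite oppr_le0 ltW.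
  rewrite switched_coefE //; case: ifP => _; first exact: le_trans epsN_le0 ler01.
  by case: ifP.
Qed.

Lemma nodal_mx_form_ge0 (v : 'rV[R]_n.+1) : 0 <= (v *m M *m v^T) 0 0.
Proof.
by rewrite -(pmulr_rge0 _ (_ : 0 < 4)) // (le_trans (sqr_ge0 _) (nodal_mx_form_bound v)).
Qed.

Lemma nodal_mx_form_eq0 (v : 'rV[R]_n.+1) :
  (v *m M *m v^T) 0 0 = 0 -> exists c, v = c *: \row_x signs b x.
Proof.
move=> v0; have := nodal_mx_form_bound v; rewrite v0 mulr0.
set D := max_increment _ _ => D2_le0.
have D0 : D = 0 by apply/eqP; rewrite -sqrf_eq0 eq_le D2_le0 sqr_ge0.
exists (signs b 0 * v 0 0); apply/rowP => x; rewrite !mxE.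
have := connect_increment_le (t v) (S_conn x 0); rewrite -/D D0 mulr0 normr_le0 subr_eq0.
by move/eqP <-; rewrite mulrAC signs_sqr mul1r.
Qed.

Lemma nodal_mx_signs_row : (\row_x signs b x) *m M = 0.
Proof.
apply: trmx_inj; rewrite trmx_mul nodal_mx_sym // trmx0.
by rewrite (_ : (\row_x _)^T = \col_x signs b x) ?nodal_mx_signs //; apply/colP => x; rewrite !mxE.
Qed.

Lemma smallest_eigenvalue_nodal_mx : smallest_eigenvalue M 0.
Proof.
split=> [|l /eigenvalueP [v vM vN0]].
  apply/eigenvalueP; exists (\row_x signs b x); first by rewrite nodal_mx_signs_row scale0r.
  by apply/negP => /eqP/rowP/(_ 0)/eqP; rewrite !mxE; apply/negP/signs_neq0.
have := nodal_mx_form_ge0 v; rewrite vM -scalemxAl mxE.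
by rewrite pmulr_lge0 ?mul_tr_self_gt0.
Qed.

Lemma simple_eigenvalue_nodal_mx : simple_eigenvalue M 0.
Proof.
apply: (mup_char_poly0 (g := \col_x signs b x)); rewrite ?mxE ?signs_neq0 ?nodal_mx_signs //.
move=> v vM.
have [c ->] : exists c, v = c *: \row_x signs b x.
  by apply: nodal_mx_form_eq0; rewrite vM mul0mx mxE.
move/(congr1 (fun A : 'M_1 => A 0 0)); rewrite -scalemxAl !mxE.
under eq_bigr => x _ do rewrite !mxE signs_sqr.
rewrite sumr_const card_ord => /eqP; rewrite mulf_eq0 pnatr_eq0 orbF => /eqP c0.
by rewrite c0 scale0r.
Qed.

End NodalSpectrum.

Lemma eq_S_connected (R : numDomainType) n (adj : rel 'I_n)
    (sigma : 'I_n -> 'I_n -> R) (f g : 'I_n -> R) :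
  f =1 g -> S_connected adj sigma f =2 S_connected adj sigma g.
Proof. by move=> fg; apply: eq_connect => x y; rewrite /S_step !fg. Qed.

Lemma strong_nodal_domains_full (R : numDomainType) n (adj : rel 'I_n.+1)
    (sigma : 'I_n.+1 -> 'I_n.+1 -> R) (f : 'I_n.+1 -> R) :
  (forall x, f x != 0) -> (forall x y, S_connected adj sigma f x y) ->
  strong_nodal_domains adj sigma f = [set [set: 'I_n.+1]].
Proof.
move=> f_neq0 S_conn; apply/setP => A; rewrite !inE.
have domE x : [set y | S_connected adj sigma f x y] = [set: 'I_n.+1].
  by apply/setP => y; rewrite !inE S_conn.
apply/imsetP/eqP => [[x _ ->] | ->]; first exact: domE.
by exists 0; rewrite ?inE ?f_neq0 ?domE.
Qed.

Unset Implicit Arguments. Set Strict Implicit.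

Theorem theorem3p10 (R : realType) (n : nat) (adj : rel 'I_n)
  (sigma : 'I_n -> 'I_n -> R) :
  (0 < n)%N ->
  signed_graph adj sigma ->
  connected_graph adj ->
  exists M : 'M[R]_n,
    [/\ symmetric_mx M, compatible adj sigma M &
      exists l1 : R,
        [/\ smallest_eigenvalue M l1, simple_eigenvalue M l1 &
          exists f1 : 'cV[R]_n,
            [/\ M *m f1 = l1 *: f1,
                forall x, f1 x 0 != 0,
                num_strong_nodal_domains adj sigma (fun x => f1 x 0) = 1%N &
                strong_nodal_domains adj sigma (fun x => f1 x 0)
                  = [set [set: 'I_n]]]]].
Proof.
case: n adj sigma => [//|n] adj sigma _ sg conn.
have [b S_conn] := exists_S_connected_signs sg 0 conn.
have N_gt0 : 0 < 2 * (n.+1)%:R ^+ 4 :> R by rewrite mulr_gt0 ?exprn_gt0 ?ltr0n.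
pose eps : R := (2 * (n.+1)%:R ^+ 4)^-1.
have eps_gt0 : 0 < eps by rewrite invr_gt0.
have eps_small : 2 * eps * (n.+1)%:R ^+ 4 <= 1 by rewrite mulrAC mulfV ?gt_eqF.
pose f1 : 'cV[R]_n.+1 := \col_x signs b x.
have f1E x : f1 x 0 = signs b x by rewrite mxE.
have f1_neq0 x : f1 x 0 != 0 by rewrite f1E signs_neq0.
have domains : strong_nodal_domains adj sigma (fun x => f1 x 0) = [set [set: 'I_n.+1]].
  by apply: strong_nodal_domains_full => // x y; rewrite (eq_S_connected _ _ f1E).
exists (nodal_mx adj sigma b eps); split.
- exact: nodal_mx_sym.
- exact: nodal_mx_compatible.
exists 0; split.
- exact: smallest_eigenvalue_nodal_mx.
- exact: simple_eigenvalue_nodal_mx.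
exists f1; split => //.
- by rewrite nodal_mx_signs // scale0r.
by rewrite /num_strong_nodal_domains domains cards1.
Qed.
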